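(* Let $U$ be a finite set of attributes, $\varphi$ a standard closure operator on $U$, and $X\subseteq U$. Let $\mathrm{WCD}(Y,\Sigma)$ denote the output of the algorithm WildClosureDirect described below on input set $Y\subseteq U$ and implication set $\Sigma$, and let $\Sigma(Z)$ denote the closure of $Z$ with respect to $\Sigma$. (i) If $\Sigma$ is the canonical direct unit basis of $\varphi$, then $\mathrm{WCD}(X,\Sigma)=\Sigma(X)$. (ii) If $\Sigma$ is the D-basis of $\varphi$, then $\mathrm{WCD}(\varphi_0(X),\Sigma)=\Sigma(\varphi_0(X))$.
   Context: An implication over $U$ is a pair $A\to B$ with $A,B\subseteq U$; the closure $\Sigma(Z)$ w.r.t. a set of implications $\Sigma$ is the smallest superset of $Z$ that contains $B$ whenever it contains $A$, for each $A\to B\in\Sigma$. A closure operator $\varphi$ on $U$ is standard if for every $a\in U$ the set $\varphi(a)\setminus\{a\}$ is closed, and $\varphi(a)\neq\varphi(b)$ for $a\neq b$. For $c\in U$, $A\subseteq U$ is a minimal generator of $c$ if $c\in\varphi(A)$, $c\notin A$, and no proper subset $A'\subsetneq A$ has $c\in\varphi(A')$. Canonical direct unit basis: $\{A\to c \mid c\in U,\ A \text{ a minimal generator of } c\}$. D-basis: let $\Sigma_0=\{a\to c\mid a,c\in U,\ c\in\varphi(a)\setminus\{a\}\}$ and $\varphi_0(X)$ the closure of $X$ w.r.t. $\Sigma_0$. A minimal generator $A$ of $c$ with $|A|\ge2$ is a minimal D-generator of $c$ if $c\notin\varphi_0(A)$ and for every minimal generator $A'$ of $c$, $A'\subseteq\varphi_0(A)$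 implies $A'=A$. The D-basis is $\Sigma_0\cup\{A\to c\mid c\in U,\ A\text{ a minimal D-generator of }c\}$. In both bases, implications with equal left-hand side may be merged into a single implication whose right-hand side is the union. Algorithm WildClosureDirect on input $(Y,\Sigma)$: for each $m\in U$ let $list[m]$ be the set of implications $A\to B\in\Sigma$ with $m\in A$. Compute $\Sigma_1:=\bigcup_{m\in U\setminus Y} list[m]$ (this set is fixed once computed). For each $A\to B\in\Sigma\setminus\Sigma_1$, set $Y:=Y\cup B$. Return $Y$. *)

From mathcomp Require Import all_boot.
Set Implicit Arguments. Unset Strict Implicit. Unset Printing Implicit Defensive.

Section Defs.
Variable U : finType.

Definition imp := ({set U} * {set U})%type.

Definition closure_op (phi : {set U} -> {set U}) : Prop :=
  [/\ forall X : {set U}, X \subset phi X,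
      forall X Y : {set U}, X \subset Y -> phi X \subset phi Y
    & forall X : {set U}, phi (phi X) = phi X].

Definition is_closed (phi : {set U} -> {set U}) (Z : {set U}) : Prop := phi Z = Z.

Definition standard (phi : {set U} -> {set U}) : Prop :=
  (forall a, is_closed phi (phi [set a] :\ a)) /\
  (forall a b, a != b -> phi [set a] != phi [set b]).

Definition respects (Sigma : {set imp}) (Z : {set U}) : bool :=
  [forall i in Sigma, (i.1 \subset Z) ==> (i.2 \subset Z)].

Definition imp_closure (Sigma : {set imp}) (Z : {set U}) : {set U} :=
  \bigcap_(S : {set U} | (Z \subset S) && respects Sigma S) S.

Definition min_gen (phi : {set U} -> {set U}) (c : U) (A : {set U}) : bool :=
  [&& c \in phi A, c \notin A &
      [forall A' : {set U}, (A' \proper A) ==> (c \notin phi A')]].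

Definition cdub (phi : {set U} -> {set U}) : {set imp} :=
  [set i : imp | [exists c, (i.2 == [set c]) && min_gen phi c i.1]].

Definition Sigma0 (phi : {set U} -> {set U}) : {set imp} :=
  [set i : imp | [exists a, exists c,
     [&& i.1 == [set a], i.2 == [set c] & c \in phi [set a] :\ a]]].

Definition phi0 (phi : {set U} -> {set U}) (X : {set U}) : {set U} :=
  imp_closure (Sigma0 phi) X.

Definition min_Dgen (phi : {set U} -> {set U}) (c : U) (A : {set U}) : bool :=
  [&& min_gen phi c A, 2 <= #|A|, c \notin phi0 phi A &
      [forall A' : {set U}, (min_gen phi c A' && (A' \subset phi0 phi A)) ==> (A' == A)]].

Definition dbasis (phi : {set U} -> {set U}) : {set imp} :=
  Sigma0 phi :|:
  [set i : imp | [exists c, (i.2 == [set c]) && min_Dgen phi c i.1]].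

Definition list_of (Sigma : {set imp}) (m : U) : {set imp} :=
  [set i in Sigma | m \in i.1].

Definition WCD (Y : {set U}) (Sigma : {set imp}) : {set U} :=
  let Sigma1 := \bigcup_(m in ~: Y) list_of Sigma m in
  Y :|: \bigcup_(i in Sigma :\: Sigma1) i.2.

End Defs.

(* WildClosureDirect adds, in a single pass, the conclusions of exactly those
   implications whose premises lie inside Y.  For both bases every implication
   is valid for phi, and every c in phi(Y) \ Y is the conclusion of a single
   implication with premise inside Y: for the canonical direct unit basis, a
   minimal generator of c inside Y; for the D-basis and Y = phi0(X), a minimal
   generator A inside Y with |phi0(A)| minimal, which is a minimal D-generator
   because in a standard closure system phi0(A) determines the minimal
   generator A.  Hence the output is phi(Y), which is closed, so it respects
   the basis and equals the closure of Y under it. *)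
From mathcomp Require Import all_boot.
Set Implicit Arguments. Unset Strict Implicit. Unset Printing Implicit Defensive.

Section ImplicationalClosure.
Variables (U : finType) (S : {set imp U}).

Lemma sub_imp_closure (Z : {set U}) : Z \subset imp_closure S Z.
Proof. by apply/bigcapsP => T /andP[]. Qed.

Lemma imp_closure_min (Z T : {set U}) :
  Z \subset T -> respects S T -> imp_closure S Z \subset T.
Proof. by move=> ZT rT; apply: bigcap_inf; rewrite ZT. Qed.

Lemma respects_imp_closure (Z : {set U}) : respects S (imp_closure S Z).
Proof.
apply/forall_inP => i iS; apply/implyP => i1Z; apply/bigcapsP => T /andP[ZT rT].
have i1T : i.1 \subset T by apply: subset_trans i1Z (imp_closure_min ZT rT).
by move/forall_inP: rT => /(_ i iS) /implyP; apply.
Qed.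

Lemma imp_closure_subset (A B : {set U}) :
  A \subset imp_closure S B -> imp_closure S A \subset imp_closure S B.
Proof. by move=> AB; apply: imp_closure_min AB (respects_imp_closure B). Qed.

Lemma WCDP (Y : {set U}) x :
  reflect (x \in Y \/ exists2 i, i \in S & (i.1 \subset Y) && (x \in i.2))
          (x \in WCD Y S).
Proof.
rewrite /WCD inE; apply: (iffP orP) => [[->|]|[->|[i iS /andP[i1Y xi]]]]; auto.
- move/bigcupP=> [i /setDP[iS i_notin] xi]; right; exists i => //.
  rewrite xi andbT; apply/subsetP => m mi; apply/negPn/negP => mY.
  by move/bigcupP: i_notin; apply; exists m; rewrite ?inE ?mY // iS mi.
- right; apply/bigcupP; exists i => //; apply/setDP; split=> //.
  apply/bigcupP => -[m]; rewrite !inE => mY /andP[_ mi].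
  by move/negP: mY; apply; apply: (subsetP i1Y).
Qed.

Lemma sub_WCD (Y : {set U}) : Y \subset WCD Y S.
Proof. by apply/subsetP => x xY; apply/WCDP; left. Qed.

Lemma WCD_subset_respects (Y T : {set U}) :
  Y \subset T -> respects S T -> WCD Y S \subset T.
Proof.
move=> YT rT; apply/subsetP => x /WCDP[/(subsetP YT) //|[i iS /andP[i1Y xi]]].
move/forall_inP: rT => /(_ i iS) /implyP /(_ (subset_trans i1Y YT)).
by move/subsetP; apply.
Qed.

(* A single pass is always below the closure; it reaches it exactly when its
   output is already closed under S. *)
Lemma WCD_eq_imp_closure (Y : {set U}) :
  respects S (WCD Y S) -> WCD Y S = imp_closure S Y.
Proof.
move=> rW; apply/eqP; rewrite eqEsubset imp_closure_min ?sub_WCD // andbT.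
exact: WCD_subset_respects (sub_imp_closure Y) (respects_imp_closure Y).
Qed.

End ImplicationalClosure.

Section ClosureOperator.
Variables (U : finType) (phi : {set U} -> {set U}).
Hypothesis phiP : closure_op phi.

Lemma sub_closure (X : {set U}) : X \subset phi X.
Proof. by case: phiP. Qed.

Lemma closure_mono (X Y : {set U}) : X \subset Y -> phi X \subset phi Y.
Proof. by case: phiP => _ + _; apply. Qed.

Lemma closure_idem (X : {set U}) : phi (phi X) = phi X.
Proof. by case: phiP. Qed.

Lemma mem_closure1 a : a \in phi [set a].
Proof. by rewrite -sub1set sub_closure. Qed.

Lemma closure_subset (A B : {set U}) : A \subset phi B -> phi A \subset phi B.
Proof. by move/closure_mono; rewrite closure_idem. Qed.

Lemma closure1_subset a b : a \in phi [set b] -> phi [set a] \subset phi [set b].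
Proof. by rewrite -sub1set; apply: closure_subset. Qed.

Definition valid (S : {set imp U}) := {in S, forall i : imp U, i.2 \subset phi i.1}.

Definition direct_at (S : {set imp U}) (Y : {set U}) :=
  forall c, c \in phi Y -> c \notin Y ->
  exists2 i, i \in S & (i.1 \subset Y) && (c \in i.2).

Lemma respects_closure S (Y : {set U}) : valid S -> respects S (phi Y).
Proof.
move=> vS; apply/forall_inP => i iS; apply/implyP => i1Y.
exact: subset_trans (vS i iS) (closure_subset i1Y).
Qed.

Lemma WCD_closure S (Y : {set U}) : valid S -> direct_at S Y -> WCD Y S = phi Y.
Proof.
move=> vS dS; apply/eqP; rewrite eqEsubset; apply/andP; split.
  exact: WCD_subset_respects (sub_closure Y) (respects_closure Y vS).
apply/subsetP => c cY; apply/WCDP.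
by have [cinY|c_notin] := boolP (c \in Y); [left | right; apply: dS].
Qed.

Lemma WCD_direct S (Y : {set U}) :
  valid S -> direct_at S Y -> WCD Y S = imp_closure S Y.
Proof.
by move=> vS dS; apply: WCD_eq_imp_closure; rewrite WCD_closure ?respects_closure.
Qed.

Lemma min_gen_exists c (Y : {set U}) :
  c \in phi Y -> c \notin Y -> exists2 A : {set U}, A \subset Y & min_gen phi c A.
Proof.
move=> cY c_notin.
have [A mA AY] := @minset_exists _ (fun A : {set U} => c \in phi A) Y cY.
exists A => //; apply/and3P; split; first exact: minsetp mA.
  by apply: contra c_notin; apply: (subsetP AY).
apply/forallP => A'; apply/implyP => ltA; apply/negP => cA'.
by have eqA := minsetinf mA cA' (proper_sub ltA); rewrite eqA properxx in ltA.
Qed.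

(* Two comparable elements of a minimal generator coincide: the smaller one
   could be dropped. *)
Lemma min_gen_antichain c (A : {set U}) x y :
  min_gen phi c A -> x \in A -> y \in A -> x \in phi [set y] -> x = y.
Proof.
case/and3P => cA _ /forallP minA xA yA xy; apply/eqP/negPn/negP => xny.
move: (minA (A :\ x)); rewrite (properD1 xA) /= => /negP; apply.
suff: A \subset phi (A :\ x) by move/closure_subset/subsetP; apply.
apply/subsetP => z zA; have [->|zx] := eqVneq z x.
  by apply: subsetP xy; apply: closure_mono; rewrite sub1set !inE eq_sym xny.
by apply: (subsetP (sub_closure _)); rewrite !inE zx.
Qed.

Lemma cdub_valid : valid (cdub phi).
Proof.
by move=> i; rewrite inE => /existsP[c /andP[/eqP-> /and3P[ci _ _]]]; rewrite sub1set.
Qed.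

Lemma cdub_direct (Y : {set U}) : direct_at (cdub phi) Y.
Proof.
move=> c cY c_notin; have [A AY mA] := min_gen_exists cY c_notin.
exists (A, [set c]); last by rewrite /= AY set11.
by rewrite inE; apply/existsP; exists c; rewrite eqxx.
Qed.

Lemma phi0E (A : {set U}) : phi0 phi A = \bigcup_(a in A) phi [set a].
Proof.
apply/eqP; rewrite eqEsubset; apply/andP; split.
  apply: imp_closure_min.
    by apply/subsetP => a aA; apply/bigcupP; exists a; rewrite ?mem_closure1.
  apply/forall_inP => i; rewrite inE.
  case/existsP=> a /existsP[c /and3P[/eqP-> /eqP-> /setD1P[_ ca]]].
  apply/implyP; rewrite !sub1set => /bigcupP[b bA ab].
  by apply/bigcupP; exists b; rewrite ?(subsetP (closure1_subset ab)).
apply/bigcupsP => a aA; apply/subsetP => x xa.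
have [->|xa'] := eqVneq x a; first exact: subsetP (sub_imp_closure _ _) _ aA.
have Ia : ([set a], [set x]) \in Sigma0 phi.
  rewrite inE; apply/existsP; exists a; apply/existsP; exists x.
  by rewrite !eqxx !inE xa' xa.
move/forall_inP: (respects_imp_closure (Sigma0 phi) A) => /(_ _ Ia) /implyP /=.
rewrite !sub1set; apply; exact: subsetP (sub_imp_closure _ _) _ aA.
Qed.

Lemma closure1_sub_phi0 (A : {set U}) a : a \in A -> phi [set a] \subset phi0 phi A.
Proof. by move=> aA; rewrite phi0E (bigcup_sup a aA). Qed.

Lemma dbasis_valid : valid (dbasis phi).
Proof.
move=> i; rewrite !inE => /orP[].
  by case/existsP=> a /existsP[c /and3P[/eqP-> /eqP-> /setD1P[_ ca]]]; rewrite sub1set.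
by case/existsP=> c /andP[/eqP-> /and4P[/and3P[ci _ _] _ _ _]]; rewrite sub1set.
Qed.

Section Standard.
Hypothesis phi_std : standard phi.

Lemma closure1_antisym a b : a \in phi [set b] -> b \in phi [set a] -> a = b.
Proof.
move=> ab ba; apply/eqP/negPn/negP => /phi_std.2; apply/negPn.
by rewrite eqEsubset !closure1_subset.
Qed.

Lemma notin_closure0 c : c \notin phi set0.
Proof.
have closed_c : phi (phi [set c] :\ c) = phi [set c] :\ c := phi_std.1 c.
have sub0 : phi set0 \subset phi [set c] :\ c by rewrite -closed_c closure_mono ?sub0set.
by apply/negP => /(subsetP sub0); rewrite !inE eqxx.
Qed.

Lemma card_gt1_notin_phi0 c (A : {set U}) :
  c \in phi A -> c \notin phi0 phi A -> 1 < #|A|.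
Proof.
move=> cA c_notin; rewrite ltnNge leq_eqVlt ltnS leqn0; apply/negP.
case/orP => [/cards1P[a A1] | /eqP/cards0_eq A0].
  move: cA c_notin; rewrite A1 => ca /negP; apply.
  exact: subsetP (closure1_sub_phi0 (set11 a)) _ ca.
by move: cA; rewrite A0 (negPf (notin_closure0 c)).
Qed.

(* For x in C pick b in B above x; b lies below some y in C, so y = x by the
   antichain property, and standardness turns x <= b <= x into x = b. *)
Lemma min_gen_sub_of_phi0_eq c (B C : {set U}) :
  min_gen phi c C -> phi0 phi B = phi0 phi C -> C \subset B.
Proof.
move=> mC BC; apply/subsetP => x xC.
have: x \in phi0 phi B by rewrite BC; apply: (subsetP (sub_imp_closure _ C)).
rewrite phi0E => /bigcupP[b bB xb].
have: b \in phi0 phi C by rewrite -BC; apply: (subsetP (sub_imp_closure _ B)).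
rewrite phi0E => /bigcupP[y yC by_].
have xy : x = y by apply: min_gen_antichain mC xC yC (subsetP (closure1_subset by_) _ xb).
by move: by_; rewrite -xy => bx; rewrite (closure1_antisym xb bx).
Qed.

Lemma min_Dgen_of_min_phi0 (X : {set U}) c (A : {set U}) :
  c \notin phi0 phi X -> min_gen phi c A -> A \subset phi0 phi X ->
  (forall A', min_gen phi c A' -> A' \subset phi0 phi X ->
     #|phi0 phi A| <= #|phi0 phi A'|) ->
  min_Dgen phi c A.
Proof.
move=> c_notin mA AY minA.
have sA := imp_closure_subset AY.
have c_notinA : c \notin phi0 phi A by apply: contra c_notin; apply: subsetP.
apply/and4P; split=> //.
  by case/and3P: mA => cA _ _; apply: card_gt1_notin_phi0 cA c_notinA.
apply/forallP => A'; apply/implyP => /andP[mA' A'A].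
have sA' : phi0 phi A' \subset phi0 phi A := imp_closure_subset A'A.
have eqA : phi0 phi A = phi0 phi A'.
  by apply/eqP; rewrite eq_sym eqEcard sA' minA // (subset_trans A'A sA).
by rewrite eqEsubset (min_gen_sub_of_phi0_eq mA' eqA)
  (min_gen_sub_of_phi0_eq mA (esym eqA)).
Qed.

Lemma dbasis_direct_phi0 (X : {set U}) : direct_at (dbasis phi) (phi0 phi X).
Proof.
move=> c cY c_notin; have [A0 A0Y mA0] := min_gen_exists cY c_notin.
pose P A := min_gen phi c A && (A \subset phi0 phi X).
have PA0 : P A0 by rewrite /P mA0 A0Y.
case: (arg_minnP (fun A => #|phi0 phi A|) PA0) => A /andP[mA AY] minA.
exists (A, [set c]); last by rewrite /= AY set11.
rewrite !inE; apply/orP; right; apply/existsP; exists c; rewrite eqxx /=.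
apply: min_Dgen_of_min_phi0 c_notin mA AY _ => A' mA' A'Y.
by apply: minA; rewrite /P mA' A'Y.
Qed.

End Standard.
End ClosureOperator.

Theorem proposition3 (U : finType) (phi : {set U} -> {set U}) (X : {set U}) :
  closure_op phi -> standard phi ->
  WCD X (cdub phi) = imp_closure (cdub phi) X /\
  WCD (phi0 phi X) (dbasis phi) = imp_closure (dbasis phi) (phi0 phi X).
Proof.
move=> phiP phi_std; split; apply: (WCD_direct phiP).
- exact: cdub_valid.
- exact: cdub_direct.
- exact: dbasis_valid.
- exact: dbasis_direct_phi0.
Qed.
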